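(* Let $F(\xi,p)=(\sigma(\xi),f_{\xi_0}(p))$ be a step skew-product on $\Sigma_N\times I$, $I=[0,1]$, with $f_i$ $C^1$-diffeomorphisms onto their images, and let $\mathcal I_P,\mathcal I_R,A,\Sigma_A,\sigma_A,\pi$, $\overline{\,\cdot\,}$ be as in the context. Let $R(x)=1-x$ and let $G(\omega,x)=(\sigma_A(\omega),g_{\omega_0}(x))$ on $\Sigma_A\times I$ with $g_i=f_i$, $g_{i+N}=R\circ f_i\circ R$ for $i\in\mathcal I_P$ and $g_i=R\circ f_i$, $g_{i+N}=f_i\circ R$ for $i\in\mathcal I_R$. Let $C=\{\omega\in\Sigma_A\colon\omega_0\in\{1,\ldots,N\}\}$ and define $\Pi\colon\Sigma_A\times I\to\Sigma_N\times I$ by $\Pi(\omega,x)=(\pi(\omega),x)$ if $\omega\in C$ and $\Pi(\omega,x)=(\pi(\omega),R(x))$ otherwise. Then $\Pi$ is a two-to-one semi-conjugation between $G$ and $F$, i.e. $\Pi$ is continuous, surjective, every point has exactly two preimages, and $\Pi\circ G=F\circ\Pi$.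
   Context: $\mathcal I_P$ (resp. $\mathcal I_R$) is the set of $i$ such that $f_i$ preserves (resp. reverses) orientation. $A=(a_{ij})_{i,j=1}^{2N}$ with $a_{ij}=1$ if ($i\in\mathcal I_P$, $j\le N$), or ($i\in\mathcal I_R$, $j>N$), or ($i-N\in\mathcal I_P$, $j>N$), or ($i-N\in\mathcal I_R$, $j\le N$), and $a_{ij}=0$ otherwise. $\Sigma_A$ is the set of sequences $\omega\in\{1,\ldots,2N\}^{\mathbb Z}$ with $a_{\omega_n\omega_{n+1}}=1$ for all $n$, $\sigma_A$ its shift; $\overline i=i$ for $i\le N$, $\overline i=i-N$ for $i>N$; $\pi(\omega)_n=\overline{\omega_n}$. *)

From HB Require Import structures.
From mathcomp Require Import all_boot all_order all_algebra.
From mathcomp Require Import all_classical all_reals all_analysis.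
Import Order.TTheory GRing.Theory Num.Theory.
Import numFieldNormedType.Exports.

Set Implicit Arguments.
Unset Strict Implicit.
Unset Printing Implicit Defensive.

Local Open Scope classical_set_scope.
Local Open Scope ring_scope.

(* Two-sided sequences of symbols, with the product (pointwise) topology;
   nat carries the discrete topology.  Symbols are 1-based, as in the paper. *)
Definition seqZ := {ptws int -> nat}.

Section Defs.
Variable R : realType.

Definition inI (x : R) : Prop := 0 <= x <= 1.

Definition C1_diffeo_onto_image (f : R -> R) : Prop :=
  [/\ (forall x, inI x -> inI (f x)),
      (forall x y, inI x -> inI y -> f x = f y -> x = y),
      (forall x, inI x -> derivable f x 1),
      {within `[0, 1], continuous (derive1 f)} &
      (forall x, inI x -> derive1 f x != 0)].

Definition orient_pres (f : R -> R) : Prop :=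
  forall x y, inI x -> inI y -> x < y -> f x < f y.
Definition orient_rev (f : R -> R) : Prop :=
  forall x y, inI x -> inI y -> x < y -> f y < f x.

Variables (N : nat) (f : nat -> R -> R).

Definition IP (i : nat) : Prop := (1 <= i <= N)%N /\ orient_pres (f i).
Definition IR (i : nat) : Prop := (1 <= i <= N)%N /\ orient_rev (f i).

Definition amat (i j : nat) : Prop :=
  (IP i /\ (j <= N)%N) \/ (IR i /\ (N < j)%N) \/
  ((N < i)%N /\ IP (i - N) /\ (N < j)%N) \/
  ((N < i)%N /\ IR (i - N) /\ (j <= N)%N).

Definition SigmaN : set seqZ := [set xi | forall n, (1 <= xi n <= N)%N].
Definition SigmaA : set seqZ :=
  [set w | forall n, (1 <= w n <= N + N)%N /\ amat (w n) (w (n + 1))].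

Definition shift (w : seqZ) : seqZ := fun n => w (n + 1).

Definition bar (i : nat) : nat := if (i <= N)%N then i else (i - N)%N.
Definition piA (w : seqZ) : seqZ := fun n => bar (w n).

Definition Fsk (p : seqZ * R) : seqZ * R := (shift p.1, f (p.1 0) p.2).

Definition Rf (x : R) : R := 1 - x.

Definition g (i : nat) : R -> R :=
  if (i <= N)%N then
    (if asbool (orient_pres (f i)) then f i else Rf \o f i)
  else
    (if asbool (orient_pres (f (i - N))) then Rf \o f (i - N) \o Rf
     else f (i - N) \o Rf).

Definition Gsk (p : seqZ * R) : seqZ * R := (shift p.1, g (p.1 0) p.2).

Definition Ccyl : set seqZ := [set w | (1 <= w 0 <= N)%N].

Definition PiMap (p : seqZ * R) : seqZ * R :=
  if asbool (Ccyl p.1) then (piA p.1, p.2) else (piA p.1, Rf p.2).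

End Defs.

From HB Require Import structures.
From mathcomp Require Import all_boot all_order all_algebra.
From mathcomp Require Import all_classical all_reals all_analysis.
From mathcomp Require Import zify lra.
Import Order.TTheory GRing.Theory Num.Theory.
Import numFieldNormedType.Exports.

Set Implicit Arguments.
Unset Strict Implicit.
Unset Printing Implicit Defensive.

Local Open Scope classical_set_scope.
Local Open Scope ring_scope.

(* A point of Sigma_A is determined by its projection xi = pi(w) together with
   its sheet at time 0, the sheet of a symbol j being the boolean (N < j) that
   tells which copy of {1, ..., N} it lies in.  Indeed the transition matrix A
   says exactly that the sheet flips between times n and n + 1 iff f_(xi n)
   reverses orientation, and this recursion along Z has one solution for each
   initial value.  So the fibre of Pi over (xi, y) consists of the two points
   (w_b, R^b y), where w_b is the lift of xi starting in sheet b and R^b is R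
   or the identity according to b.  Conjugating by R according to the sheets
   of w_0 and w_1 turns g_(w_0) into f_(xi_0), which gives Pi o G = F o Pi;
   continuity holds because pi acts coordinatewise and the choice between x
   and R x only depends on w_0. *)

Lemma cvg_ptws (I : Type) (V : topologicalType) (F : set_system (I -> V))
    (f : I -> V) :
  Filter F -> (forall t, (fun g => g t) @ F --> f t) ->
  F --> (f : {ptws I -> V}).
Proof.
move=> FF cvt; apply/cvg_sup => t A /=.
rewrite (@nbhsE (initial_topology (fun g : I -> V => g t))).
move=> -[B [[C oC <-] Bf] sBA].
by apply: filterS sBA _; apply: cvt; exact: open_nbhs_nbhs.
Qed.

Lemma near_coord (w : seqZ) (t : int) : \forall v \near w, v t = w t.
Proof.
by move/(discrete_cvg _ _ _): (@proj_continuous int (fun=> nat) t w).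
Qed.

Lemma piA_continuous N : continuous (piA N).
Proof.
move=> w; apply: cvg_ptws => t; apply/discrete_cvg.
by move: (near_coord w t); apply: filterS => v /= vt; rewrite /piA vt.
Qed.

Lemma PiMap_continuous (R : realType) N : continuous (@PiMap R N).
Proof.
move=> [w x]; set c := asbool (Ccyl N w).
have PiMap_near : \forall p \near (w, x),
    (piA N p.1, if c then p.2 else Rf p.2) = PiMap N p.
  have : \forall p \near (w, x), p.1 0 = w 0.
    exact: (@cvg_fst _ _ (nbhs w) (nbhs x) _ _ (near_coord w 0)).
  apply: filterS => p e; have Cp : Ccyl N p.1 = Ccyl N w by rewrite /Ccyl /= e.
  by rewrite /PiMap Cp -/c; case: c.
apply: cvg_trans; first exact: (near_eq_cvg PiMap_near).
have -> : PiMap N (w, x) = (piA N w, if c then x else Rf x).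
  by rewrite /PiMap -/c; case: c {PiMap_near}.
have fst_cvg : (fun p => piA N p.1) @ nbhs (w, x) --> piA N w.
  by apply: (cvg_comp fst (piA N)); [exact: cvg_fst | exact: piA_continuous].
have snd_cvg : (fun p => if c then p.2 else Rf p.2) @ nbhs (w, x) -->
    (if c then x else Rf x).
  case: c {PiMap_near}; first exact: cvg_snd.
  by apply: cvgB; [exact: cvg_cst | exact: cvg_snd].
exact: (cvg_pair fst_cvg snd_cvg).
Qed.

Definition xor_primitive (r : int -> bool) (b : bool) (n : int) : bool :=
  match n with
  | Posz k => b (+) \big[addb/false]_(0 <= i < k) r i
  | Negz k => b (+) \big[addb/false]_(0 <= i < k.+1) r (Negz i)
  end.

Lemma xor_primitive0 r b : xor_primitive r b 0%N = b.
Proof. by rewrite /= big_geq ?addbF. Qed.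

Lemma xor_primitiveS r b n :
  xor_primitive r b (n + 1) = xor_primitive r b n (+) r n.
Proof.
case: n => [k|[|k]].
- by rewrite -PoszD addn1 /= big_nat_recr //= addbA.
- by rewrite /= big_nat1 big_geq // addbF addbK.
- have -> : Negz k.+1 + 1 = Negz k by rewrite !NegzE; lia.
  by rewrite /= [in RHS]big_nat_recr //= addbA addbK.
Qed.

Lemma shift_invariant_constant (T : Type) (d : int -> T) :
  (forall n, d (n + 1) = d n) -> forall n, d n = d 0.
Proof.
move=> dS; elim/int_rect => [//|n IH|n IH].
- by rewrite -IH -(dS n) -PoszD addn1.
- by rewrite -IH -(dS (- n.+1%:Z)); congr d; lia.
Qed.

Lemma xor_primitive_unique (r e : int -> bool) :
  (forall n, e (n + 1) = e n (+) r n) -> e =1 xor_primitive r (e 0).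
Proof.
move=> eS n; set x := xor_primitive r (e 0).
have exS m : e (m + 1) (+) x (m + 1) = e m (+) x m.
  by rewrite eS /x xor_primitiveS addbACA addbb addbF.
have := @shift_invariant_constant _ (fun m => e m (+) x m) exS n.
rewrite /= big_geq // addbF addbb.
by move/(congr1 (addb^~ (x n))); rewrite addbK.
Qed.

Lemma orient_pres_rev_excl (R : realType) (h : R -> R) :
  orient_pres h -> ~ orient_rev h.
Proof.
have I0 : inI (0 : R) by rewrite /inI lexx ler01.
have I1 : inI (1 : R) by rewrite /inI lexx ler01.
move=> hp hr; have := lt_trans (hp 0 1 I0 I1 ltr01) (hr 0 1 I0 I1 ltr01).
by rewrite ltxx.
Qed.

Lemma C1_diffeo_orient (R : realType) (h : R -> R) :
  C1_diffeo_onto_image h -> orient_pres h \/ orient_rev h.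
Proof.
move=> [_ h_inj h_der _ _].
have h_cont : {within [set` `[(0 : R), 1]], continuous h}.
  by apply: derivable_within_continuous => x; rewrite in_itv; exact: h_der.
have h_inj' : {in `[(0 : R), 1] &, injective h}.
  by move=> x y; rewrite !in_itv; exact: h_inj.
have [h_mono|h_mono] := itv_continuous_inj_mono h_cont h_inj'; [left|right];
  by move=> x y hx hy; apply: h_mono; rewrite in_itv.
Qed.

Definition flip (R : realType) (c : bool) (x : R) : R := if c then Rf x else x.

Lemma flipK (R : realType) (c : bool) : involutive (@flip R c).
Proof. by case: c => x //=; rewrite /Rf opprB addrC subrK. Qed.

Lemma inI_flip (R : realType) (c : bool) (x : R) : inI x -> inI (flip c x).
Proof.
by case: c => //=; rewrite /inI /Rf => /andP[? ?]; apply/andP; split; lra.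
Qed.

Lemma PiMapE (R : realType) N (w : seqZ) (x : R) :
  (0 < w 0)%N -> PiMap N (w, x) = (piA N w, flip (N < w 0)%N x).
Proof.
move=> w0_gt0; rewrite /PiMap /Ccyl /flip /=.
by case: asboolP => hC; case: ltnP => hN //; exfalso; lia.
Qed.

Section Lift.
Variables (R : realType) (N : nat) (f : nat -> R -> R).
Hypothesis f_diffeo : forall i, (0 < i <= N)%N -> C1_diffeo_onto_image (f i).

Definition reverses (i : nat) : bool := ~~ `[< orient_pres (f i) >].

Lemma IPE i : IP N f i <-> (0 < i <= N)%N /\ ~~ reverses i.
Proof. by rewrite /IP /reverses negbK; split => -[? /asboolP]. Qed.

Lemma IRE i : IR N f i <-> (0 < i <= N)%N /\ reverses i.
Proof.
rewrite /IR /reverses; split => -[i_range hi]; split => //.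
  by apply/asboolP => hp; exact: orient_pres_rev_excl hp hi.
have [/asboolP|//] := C1_diffeo_orient (f_diffeo i_range).
by rewrite (negbTE hi).
Qed.

Lemma amatE i j : (0 < i <= N + N)%N ->
  amat N f i j <-> (N < j)%N = (N < i)%N (+) reverses (bar N i).
Proof.
move=> i_range; rewrite /amat !IPE !IRE /bar.
case: (leqP i N) => hi; [case: (reverses i) | case: (reverses (i - N))]; lia.
Qed.

Lemma SigmaA_sheetS (w : seqZ) n : SigmaA N f w ->
  (N < w (n + 1)%R)%N = (N < w n)%N (+) reverses (bar N (w n)).
Proof. by case/(_ n) => w_range /(amatE _ w_range). Qed.

Definition lift_sym (c : bool) (i : nat) : nat := if c then (i + N)%N else i.

Lemma lift_sym_bar j : lift_sym (N < j)%N (bar N j) = j.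
Proof. by rewrite /lift_sym /bar; case: leqP => hj //=; lia. Qed.

Section LiftSym.
Variables (c : bool) (i : nat).
Hypothesis i_range : (0 < i <= N)%N.

Lemma bar_lift_sym : bar N (lift_sym c i) = i.
Proof. by rewrite /bar /lift_sym; case: c; case: leqP => //; lia. Qed.

Lemma sheet_lift_sym : (N < lift_sym c i)%N = c.
Proof. by rewrite /lift_sym; case: c; lia. Qed.

Lemma lift_sym_range : (0 < lift_sym c i <= N + N)%N.
Proof. by rewrite /lift_sym; case: c; lia. Qed.

End LiftSym.

Definition lift (xi : seqZ) (b : bool) : seqZ :=
  fun n => lift_sym (xor_primitive (reverses \o xi) b n) (xi n).

Section LiftOfSigmaN.
Variables (xi : seqZ) (b : bool).
Hypothesis xi_SigmaN : SigmaN N xi.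

Lemma piA_lift : piA N (lift xi b) = xi.
Proof. by apply: funext => n; rewrite /piA /lift bar_lift_sym. Qed.

Lemma sheet_lift n : (N < lift xi b n)%N = xor_primitive (reverses \o xi) b n.
Proof. exact: sheet_lift_sym. Qed.

Lemma lift_SigmaA : SigmaA N f (lift xi b).
Proof.
move=> n; have lift_range : (0 < lift xi b n <= N + N)%N.
  exact: lift_sym_range.
split => //.
apply/(amatE _ lift_range).
by rewrite !sheet_lift bar_lift_sym // xor_primitiveS.
Qed.

End LiftOfSigmaN.

Lemma piA_SigmaN (w : seqZ) : SigmaA N f w -> SigmaN N (piA N w).
Proof.
move=> w_SigmaA n; have [w_range _] := w_SigmaA n.
by rewrite /piA /bar; case: ifP; lia.
Qed.

Lemma SigmaA_lift (w : seqZ) : SigmaA N f w -> w = lift (piA N w) (N < w 0)%N.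
Proof.
move=> w_SigmaA; apply: funext => n; rewrite /lift /=.
rewrite -(xor_primitive_unique (e := fun n => (N < w n)%N)) ?lift_sym_bar //.
by move=> m; rewrite SigmaA_sheetS.
Qed.

Lemma gE i x :
  g N f i x =
  flip ((N < i)%N (+) reverses (bar N i)) (f (bar N i) (flip (N < i)%N x)).
Proof. by rewrite /g /bar /reverses; case: (leqP i N); case: asboolP. Qed.

Lemma PiMap_Gsk (w : seqZ) x : SigmaA N f w ->
  PiMap N (Gsk N f (w, x)) = Fsk f (PiMap N (w, x)).
Proof.
move=> w_SigmaA; have /andP[w0_gt0 _] := (w_SigmaA 0).1.
have /andP[w1_gt0 _] := (w_SigmaA (0 + 1)).1.
by rewrite /Gsk !PiMapE //= gE (SigmaA_sheetS 0 w_SigmaA) flipK.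
Qed.

Lemma PiMap_lift (xi : seqZ) b (y : R) :
  SigmaN N xi -> PiMap N (lift xi b, flip b y) = (xi, y).
Proof.
move=> xi_SigmaN; have /andP[lift0_gt0 _] : (0 < lift xi b 0 <= N + N)%N.
  exact: lift_sym_range.
by rewrite PiMapE // (sheet_lift b xi_SigmaN) xor_primitive0 flipK piA_lift.
Qed.

Lemma lift_inj (xi : seqZ) : SigmaN N xi -> injective (lift xi).
Proof.
move=> xi_SigmaN b1 b2 /(congr1 (fun w : seqZ => (N < w 0)%N)).
by rewrite !sheet_lift // !xor_primitive0.
Qed.

Lemma PiMap_fibre (w : seqZ) (x : R) xi y :
  SigmaA N f w -> PiMap N (w, x) = (xi, y) ->
  (w, x) = (lift xi (N < w 0)%N, flip (N < w 0)%N y).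
Proof.
move=> w_SigmaA; have /andP[w0_gt0 _] := (w_SigmaA 0).1.
by rewrite PiMapE // => -[<- <-]; rewrite flipK -SigmaA_lift.
Qed.

End Lift.

Theorem lemma3p5 (R : realType) (N : nat) (f : nat -> R -> R) :
  (forall i, (1 <= i <= N)%N -> C1_diffeo_onto_image (f i)) ->
  let XA := SigmaA N f `*` [set x : R | inI x] in
  let XN := SigmaN N `*` [set x : R | inI x] in
  [/\ {within XA, continuous PiMap N},
      (forall p, XA p -> XN (PiMap N p)),
      (forall q, XN q -> exists p, XA p /\ PiMap N p = q),
      (forall q, XN q -> exists p1 p2,
          [/\ XA p1 /\ XA p2, p1 <> p2, PiMap N p1 = q, PiMap N p2 = q &
              forall p, XA p -> PiMap N p = q -> p = p1 \/ p = p2]) &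
      (forall p, XA p -> PiMap N (Gsk N f p) = Fsk f (PiMap N p))].
Proof.
move=> f_diffeo XA XN.
have two_to_one : forall q, XN q -> exists p1 p2,
    [/\ XA p1 /\ XA p2, p1 <> p2, PiMap N p1 = q, PiMap N p2 = q &
        forall p, XA p -> PiMap N p = q -> p = p1 \/ p = p2].
  move=> [xi y] [/= xi_SigmaN y_inI].
  exists (lift N f xi false, flip false y), (lift N f xi true, flip true y).
  split.
  - by split; (split; [exact: lift_SigmaA | exact: inI_flip]).
  - by case=> /(lift_inj xi_SigmaN).
  - exact: PiMap_lift.
  - exact: PiMap_lift.
  move=> [w x] [/= w_SigmaA _] /(PiMap_fibre f_diffeo w_SigmaA) ->.
  by case: (N < w 0)%N; [right | left].
split.
- exact: continuous_subspaceT (@PiMap_continuous R N).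
- move=> [w x] [/= w_SigmaA x_inI]; have /andP[w0_gt0 _] := (w_SigmaA 0).1.
  by rewrite PiMapE //; split; [exact: piA_SigmaN | exact: inI_flip].
- by move=> q /two_to_one [p1 [_ [[XA_p1 _] _ <- _ _]]]; exists p1.
- exact: two_to_one.
- by move=> [w x] [/= w_SigmaA _]; exact: PiMap_Gsk.
Qed.
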